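(* Under the hypotheses and with the sequences $(\beta_k),(\lambda_k),(x_k),(y_k)$ of the accelerated scheme (any $\lambda_0>0$), set $\beta_0=0$, $\delta_k=F(y_k)-F(x^* )$ and $u_k=\beta_k x_k-(\beta_k-1)y_k-x^*$. Then for every $k\ge1$, $$\lambda_k\beta_k^2\,\delta_{k+1}-\lambda_{k-1}\beta_{k-1}^2\,\delta_k\le\tfrac12\big(\|u_k\|^2-\|u_{k+1}\|^2\big).$$
   Context: $\mathbb{R}^d$ carries the standard inner product $\langle\cdot,\cdot\rangle$ and Euclidean norm $\|\cdot\|$. $f:\mathbb{R}^d\to\mathbb{R}$ is convex and differentiable with $L$-Lipschitz gradient, $h:\mathbb{R}^d\to\mathbb{R}\cup\{+\infty\}$ is proper, closed and convex, $F=f+h$, and $x^*$ is a minimizer of $F$. For $\lambda>0$, $\mathrm{prox}_{\lambda h}(w)=\arg\min_{u}\{\lambda h(u)+\tfrac12\|u-w\|^2\}$ and $G^{f}_{\lambda h}(x)=\frac{1}{\lambda}(x-\mathrm{prox}_{\lambda h}(x-\lambda\nabla f(x)))$. The linesearch condition $\mathrm{(LS)}(x,\lambda)$ is: with $G=G^{f}_{\lambda h}(x)$, $f(x-2\lambda G)\le f(x-\lambda G)-\lambda\langle G,\nabla f(x)\rangle+\tfrac{\lambda}{2}\|G\|^2$. Accelerated scheme: $x_1=y_1\in\mathrm{dom}\,h$, $\lambda_0>0$, $\beta_1=1$, $\beta_{k+1}=\frac{1+\sqrt{1+4\beta_k^2}}{2}$, and for $k\ge1$: $\lambda_k=\max\{\lambda\in(0,\lambda_{k-1}]:\mathrm{(LS)}(x_k,\lambda)\}$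 (assumed attained), $y_{k+1}=x_k-\lambda_kG^{f}_{\lambda_kh}(x_k)$, $x_{k+1}=y_{k+1}+\frac{\beta_k-1}{\beta_{k+1}}(y_{k+1}-y_k)$. *)

From HB Require Import structures.
From mathcomp Require Import all_boot all_order all_algebra.
From mathcomp Require Import all_classical all_reals all_analysis.
Set Implicit Arguments. Unset Strict Implicit. Unset Printing Implicit Defensive.
Import Order.TTheory GRing.Theory Num.Theory.
Import numFieldNormedType.Exports.
Local Open Scope ring_scope.
Local Open Scope classical_set_scope.

Definition dotp {R : realType} {d : nat} (u v : 'rV[R]_d) : R :=
  \sum_(i < d) u ord0 i * v ord0 i.
Definition enorm {R : realType} {d : nat} (u : 'rV[R]_d) : R :=
  Num.sqrt (dotp u u).

Definition convex_fun {R : realType} {d : nat} (f : 'rV[R]_d -> R) : Prop :=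
  forall (x y : 'rV[R]_d) (t : R), 0 <= t <= 1 ->
    f (t *: x + (1 - t) *: y) <= t * f x + (1 - t) * f y.

(* convexity of an extended-real-valued function (never -oo when used) *)
Definition econvex_fun {R : realType} {d : nat} (h : 'rV[R]_d -> \bar R) : Prop :=
  forall (x y : 'rV[R]_d) (t : R), 0 <= t <= 1 ->
    (h (t *: x + (1 - t) *: y)%R <= t%:E * h x + (1 - t)%:E * h y)%E.

Definition proper_fun {R : realType} {d : nat} (h : 'rV[R]_d -> \bar R) : Prop :=
  (forall x, h x != -oo%E) /\ (exists x, h x \is a fin_num).

Definition closed_fun {R : realType} {d : nat} (h : 'rV[R]_d -> \bar R) : Prop :=
  closed [set p : 'rV[R]_d * R | (h p.1 <= p.2%:E)%E].

Definition is_gradient {R : realType} {d : nat} (f : 'rV[R]_d -> R)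
  (gradf : 'rV[R]_d -> 'rV[R]_d) : Prop :=
  forall x, differentiable f x /\ forall v, 'd f x v = dotp (gradf x) v.

Definition is_prox {R : realType} {d : nat} (h : 'rV[R]_d -> \bar R)
  (prox : R -> 'rV[R]_d -> 'rV[R]_d) : Prop :=
  forall (lam : R) (w u : 'rV[R]_d), 0 < lam ->
    (lam%:E * h (prox lam w) + (2^-1 * enorm (prox lam w - w)%R ^+ 2)%:E
      <= lam%:E * h u + (2^-1 * enorm (u - w)%R ^+ 2)%:E)%E.

Definition Gmap {R : realType} {d : nat} (gradf : 'rV[R]_d -> 'rV[R]_d)
  (prox : R -> 'rV[R]_d -> 'rV[R]_d) (lam : R) (x : 'rV[R]_d) : 'rV[R]_d :=
  lam^-1 *: (x - prox lam (x - lam *: gradf x)).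

Definition LS {R : realType} {d : nat} (f : 'rV[R]_d -> R)
  (gradf : 'rV[R]_d -> 'rV[R]_d) (prox : R -> 'rV[R]_d -> 'rV[R]_d)
  (x : 'rV[R]_d) (lam : R) : Prop :=
  let G := Gmap gradf prox lam x in
  f (x - (2 * lam) *: G) <= f (x - lam *: G) - lam * dotp G (gradf x)
                             + lam / 2 * enorm G ^+ 2.

(* The key estimate is the descent inequality for one proximal-gradient step
   accepted by the linesearch: with G = G_{λh}(x) and y⁺ = x - λG,
   F(y⁺) <= F(z) + <G, x - z> - λ/2 ‖G‖² for every z.
   It combines the convexity of f at the midpoint of x - λG between x and
   x - 2λG, the condition (LS), the gradient inequality of f and the
   variational inequality of the prox.  Adding this inequality at z = y_k with
   weight β_k - 1 and at z = x* with weight 1, multiplying by λ_k β_k, and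
   using β_k² - β_k = β_{k-1}², λ_k <= λ_{k-1}, δ_k >= 0 and
   u_{k+1} = u_k - λ_k β_k G gives the claim. *)
From HB Require Import structures.
From mathcomp Require Import all_boot all_order all_algebra.
From mathcomp Require Import all_classical all_reals all_analysis.
From mathcomp Require Import ring lra.
Set Implicit Arguments. Unset Strict Implicit. Unset Printing Implicit Defensive.
Import Order.TTheory GRing.Theory Num.Theory.
Import numFieldNormedType.Exports.
Local Open Scope ring_scope.
Local Open Scope classical_set_scope.

Section DotProduct.
Variables (R : realType) (d : nat).
Implicit Types (u v w : 'rV[R]_d) (a : R).

Lemma dotpC u v : dotp u v = dotp v u.
Proof. by apply: eq_bigr => i _; rewrite mulrC. Qed.

Lemma dotpDr u v w : dotp u (v + w) = dotp u v + dotp u w.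
Proof. by rewrite /dotp -big_split; apply: eq_bigr => i _; rewrite mxE mulrDr. Qed.

Lemma dotpZr u a v : dotp u (a *: v) = a * dotp u v.
Proof. by rewrite /dotp mulr_sumr; apply: eq_bigr => i _; rewrite mxE; ring. Qed.

Lemma dotpNr u v : dotp u (- v) = - dotp u v.
Proof. by rewrite /dotp -sumrN; apply: eq_bigr => i _; rewrite mxE mulrN. Qed.

Lemma dotpDl u v w : dotp (v + w) u = dotp v u + dotp w u.
Proof. by rewrite dotpC dotpDr !(dotpC u). Qed.

Lemma dotpZl u a v : dotp (a *: v) u = a * dotp v u.
Proof. by rewrite dotpC dotpZr dotpC. Qed.

Lemma dotpNl u v : dotp (- v) u = - dotp v u.
Proof. by rewrite dotpC dotpNr dotpC. Qed.

Lemma dotp_ge0 u : 0 <= dotp u u.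
Proof. by apply: sumr_ge0 => i _; rewrite -expr2 sqr_ge0. Qed.

Lemma enorm_sqr u : enorm u ^+ 2 = dotp u u.
Proof. by rewrite /enorm sqr_sqrtr // dotp_ge0. Qed.

End DotProduct.

Definition dotpE := (dotpDr, dotpDl, dotpZr, dotpZl, dotpNr, dotpNl).

Lemma lin_coef_ge0 (R : realType) (A B : R) : 0 <= B ->
  (forall t, 0 < t -> t <= 1 -> 0 <= t * A + t ^+ 2 * B) -> 0 <= A.
Proof.
move=> B0 H; rewrite leNgt; apply/negP => A0.
(* For A < 0 the choice t = -A / (2B - A) makes A + t B = A (B - A) / (2B - A) < 0. *)
have D0 : 0 < 2 * B - A by lra.
pose t := - A / (2 * B - A).
have t0 : 0 < t by rewrite /t divr_gt0 //; lra.
have t1 : t <= 1 by rewrite /t ler_pdivrMr //; lra.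
have key : (A + t * B) * (2 * B - A) = A * (B - A).
  by rewrite /t; field; rewrite gt_eqF.
have : A + t * B < 0.
  have : (A + t * B) * (2 * B - A) < 0 by rewrite key; nra.
  by rewrite pmulr_llt0.
by have := H t t0 t1; nra.
Qed.

Section ProximalGradientStep.
Variables (R : realType) (d : nat).
Variables (f : 'rV[R]_d -> R) (gradf : 'rV[R]_d -> 'rV[R]_d).
Variables (h : 'rV[R]_d -> \bar R) (prox : R -> 'rV[R]_d -> 'rV[R]_d).
Hypotheses (f_convex : convex_fun f) (f_grad : is_gradient f gradf).
Hypotheses (h_proper : proper_fun h) (h_convex : econvex_fun h).
Hypothesis prox_min : is_prox h prox.

Lemma prox_fin_num lam w z : 0 < lam -> h z \is a fin_num ->
  h (prox lam w) \is a fin_num.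
Proof.
move=> lam0 hz; have := @prox_min lam w z lam0; rewrite -(fineK hz) -EFinM -EFinD.
move: (h_proper.1 (prox lam w)); case: (h (prox lam w)) => // _.
by rewrite gt0_muley ?lte_fin.
Qed.

(* Minimality of the prox point p against t z + (1 - t) p, t -> 0+. *)
Lemma prox_variational_ineq lam w z : 0 < lam ->
  h (prox lam w) \is a fin_num -> h z \is a fin_num ->
  0 <= lam * (fine (h z) - fine (h (prox lam w)))
       + dotp (prox lam w - w) (z - prox lam w).
Proof.
move=> lam0; set p := prox lam w => hp hz.
apply: (lin_coef_ge0 (B := 2^-1 * dotp (z - p) (z - p))).
  by rewrite mulr_ge0 ?dotp_ge0.
move=> t t0 t1; set v := t *: z + (1 - t) *: p.
have Hc : (h v <= t%:E * h z + (1 - t)%:E * h p)%E.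
  by apply: h_convex; rewrite ltW //= t1.
rewrite -(fineK hz) -(fineK hp) -!EFinM -EFinD in Hc.
have hv : h v \is a fin_num by move: Hc (h_proper.1 v); case: (h v).
rewrite -(fineK hv) lee_fin in Hc.
have Hp := @prox_min lam w v lam0.
rewrite -/p -(fineK hp) -(fineK hv) -!EFinM -!EFinD lee_fin !enorm_sqr in Hp.
move: Hp Hc.
have -> : v - w = (p - w) + t *: (z - p) by apply/rowP => i; rewrite !mxE; ring.
rewrite !dotpE [dotp w p]dotpC [dotp z p]dotpC [dotp w z]dotpC => Hp Hc.
by have := ler_wpM2l (ltW lam0) Hc; lra.
Qed.

(* The difference quotients of f along z - x are bounded by f z - f x on (0, 1]
   by convexity, and converge to the directional derivative as t -> 0+. *)
Lemma convex_gradient_ineq x z : f x + dotp (gradf x) (z - x) <= f z.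
Proof.
have [dfx <-] := f_grad x; rewrite -deriveE //.
set g := fun t : R => t^-1 *: ((f \o shift x) (t *: (z - x)) - f x).
have cvg_g : cvg (g @ 0^') by exact: diff_derivable.
have cvg_g_right : g @ 0^'+ --> lim (g @ 0^').
  move=> A /cvg_g /nbhs_ballP [_ /posnumP[e] xe_A].
  by exists e%:num => //= s xe_s /gt_eqF/negbT/xe_A; exact.
rewrite -lerBrDl; apply: (cvgr_to_le cvg_g_right); near=> t.
have t0 : 0 < t by near: t; exact: nbhs_right_gt.
have t1 : t <= 1.
  near: t; exists 1 => //= s; rewrite /ball /= sub0r normrN => /ltW + s0.
  by rewrite ger0_norm // ltW.
have Hc := @f_convex z x t; rewrite t1 ltW //= in Hc.
have Ez : t *: z + (1 - t) *: x = t *: (z - x) + x.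
  by apply/rowP => i; rewrite !mxE; ring.
rewrite /g /= -[_ *: _]/(t^-1 * _) -(ler_pM2l t0) mulrA mulfV ?gt_eqF // mul1r.
by rewrite Ez in Hc; have := Hc isT; lra.
Unshelve. all: by end_near.
Qed.

Lemma Gmap_step lam x : 0 < lam ->
  x - lam *: Gmap gradf prox lam x = prox lam (x - lam *: gradf x).
Proof. by move=> lam0; apply/rowP => i; rewrite /Gmap !mxE; field; rewrite gt_eqF. Qed.

Lemma LS_descent x lam z : 0 < lam -> LS f gradf prox x lam ->
  let G := Gmap gradf prox lam x in
  h (x - lam *: G) \is a fin_num -> h z \is a fin_num ->
  f (x - lam *: G) + fine (h (x - lam *: G))
    <= f z + fine (h z) + dotp G (x - z) - lam / 2 * dotp G G.
Proof.
move=> lam0 ls G hp hz; rewrite /LS -/G enorm_sqr in ls.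
have Hprox := prox_variational_ineq (w := x - lam *: gradf x) (z := z) lam0.
rewrite -Gmap_step // -/G in Hprox; have {}Hprox := Hprox hp hz.
have Estep : x - lam *: G - (x - lam *: gradf x) = lam *: (gradf x - G).
  by apply/rowP => i; rewrite !mxE; ring.
rewrite Estep dotpZl -mulrDr pmulr_rge0 // in Hprox.
have Hgrad := @convex_gradient_ineq x z.
clearbody G.
have Hmid : f (x - lam *: G)
    <= 2^-1 * f x + (1 - 2^-1) * f (x - (2 * lam) *: G).
  have -> : x - lam *: G = 2^-1 *: x + (1 - 2^-1) *: (x - (2 * lam) *: G).
    by apply/rowP => i; rewrite !mxE; field.
  by apply: f_convex; lra.
move: Hprox Hgrad ls; rewrite !dotpE [dotp G (gradf x)]dotpC.
lra.
Qed.

End ProximalGradientStep.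

Lemma beta_step (R : realType) (beta : nat -> R) k :
  beta 0%N = 0 -> beta 1%N = 1 ->
  (forall k, (1 <= k)%N -> beta k.+1 = (1 + Num.sqrt (1 + 4 * beta k ^+ 2)) / 2) ->
  (1 <= k)%N -> 1 <= beta k /\ beta k ^+ 2 - beta k = beta k.-1 ^+ 2.
Proof.
move=> b0 b1 bS; case: k => // [] [|m] _.
  by rewrite b1 b0 expr1n expr0n subrr.
rewrite bS //=; set s := Num.sqrt _.
have s0 : 0 <= s := sqrtr_ge0 _.
have s2 : s ^+ 2 = 1 + 4 * beta m.+1 ^+ 2.
  by rewrite sqr_sqrtr // addr_ge0 // mulr_ge0 // sqr_ge0.
split; first nra.
by transitivity ((s ^+ 2 - 1) / 4); [field | rewrite s2; field].
Qed.

(* P, Q, S stand for F(y_{k+1}), F(y_k), F(xstar); lam' and b' for λ_{k-1}, β_{k-1}. *)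
Lemma accelerated_step (R : realType) (d : nat) (P Q S lam lam' b b' : R)
    (x y xs G : 'rV[R]_d) :
  1 <= b -> b ^+ 2 - b = b' ^+ 2 -> 0 < lam -> lam <= lam' -> S <= Q ->
  P <= Q + dotp G (x - y) - lam / 2 * dotp G G ->
  P <= S + dotp G (x - xs) - lam / 2 * dotp G G ->
  let U := b *: x - (b - 1) *: y - xs in
  lam * b ^+ 2 * (P - S) - lam' * b' ^+ 2 * (Q - S)
    <= 2^-1 * (enorm U ^+ 2 - enorm (U - (lam * b) *: G) ^+ 2).
Proof.
move=> b1 bb' lam0 lamle SQ Dy Dxs /=; set U := b *: x - _ - xs.
have GU : dotp G U = b * dotp G x - (b - 1) * dotp G y - dotp G xs.
  by rewrite /U !dotpE; ring.
clearbody U; rewrite !enorm_sqr !dotpE [dotp U G]dotpC GU.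
move: Dy Dxs; rewrite !dotpE => Dy Dxs.
have b1_ge0 : 0 <= b - 1 by rewrite subr_ge0.
have QS_ge0 : 0 <= Q - S by rewrite subr_ge0.
have comb : b * (P - S) <= (b - 1) * (Q - S)
    + (b * dotp G x - (b - 1) * dotp G y - dotp G xs) - b * lam / 2 * dotp G G.
  by have := ler_wpM2l b1_ge0 Dy; lra.
have := ler_wpM2l (mulr_ge0 (ltW lam0) (le_trans ler01 b1)) comb.
have := ler_wpM2r (mulr_ge0 (sqr_ge0 b') QS_ge0) lamle.
have : lam * b * ((b - 1) * (Q - S)) = lam * b' ^+ 2 * (Q - S).
  by rewrite -bb'; ring.
lra.
Qed.

Theorem mainTheorem9 (R : realType) (d : nat)
  (f : 'rV[R]_d -> R) (gradf : 'rV[R]_d -> 'rV[R]_d) (L : R)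
  (h : 'rV[R]_d -> \bar R) (prox : R -> 'rV[R]_d -> 'rV[R]_d)
  (xstar : 'rV[R]_d)
  (beta lambda : nat -> R) (x y : nat -> 'rV[R]_d) :
  convex_fun f ->
  is_gradient f gradf ->
  (forall u v, enorm (gradf u - gradf v) <= L * enorm (u - v)) ->
  proper_fun h -> closed_fun h -> econvex_fun h ->
  is_prox h prox ->
  (forall z, ((f xstar)%:E + h xstar <= (f z)%:E + h z)%E) ->
  x 1%N = y 1%N -> h (x 1%N) \is a fin_num ->
  0 < lambda 0%N ->
  beta 0%N = 0 -> beta 1%N = 1 ->
  (forall k, (1 <= k)%N ->
     beta k.+1 = (1 + Num.sqrt (1 + 4 * beta k ^+ 2)) / 2) ->
  (forall k, (1 <= k)%N ->
     [/\ 0 < lambda k, lambda k <= lambda k.-1,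
         LS f gradf prox (x k) (lambda k) &
         forall lam, 0 < lam -> lam <= lambda k.-1 ->
           LS f gradf prox (x k) lam -> lam <= lambda k]) ->
  (forall k, (1 <= k)%N ->
     y k.+1 = x k - lambda k *: Gmap gradf prox (lambda k) (x k)) ->
  (forall k, (1 <= k)%N ->
     x k.+1 = y k.+1 + ((beta k - 1) / beta k.+1) *: (y k.+1 - y k)) ->
  let delta k := ((f (y k))%:E + h (y k) - ((f xstar)%:E + h xstar))%E in
  let u k := beta k *: x k - (beta k - 1) *: y k - xstar in
  forall k, (1 <= k)%N ->
    ((lambda k * beta k ^+ 2)%:E * delta k.+1
       - (lambda k.-1 * beta k.-1 ^+ 2)%:E * delta k
     <= (2^-1 * (enorm (u k) ^+ 2 - enorm (u k.+1) ^+ 2))%:E)%E.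
Proof.
move=> cf gf _ hpr _ hc hp xopt x1y1 hx1 _ b0 b1 bS hl ye xe delta u k k1.
have hy j : (1 <= j)%N -> h (y j) \is a fin_num.
  case: j => // [] [|j] _; first by rewrite -x1y1.
  have [l0 _ _ _] := hl j.+1 isT.
  by rewrite ye // Gmap_step // (prox_fin_num hpr hp _ l0 hx1).
have hxs : h xstar \is a fin_num.
  have := xopt (x 1%N); rewrite -(fineK hx1) -EFinD.
  by move: (hpr.1 xstar); case: (h xstar).
have [lk0 lkle ls _] := hl k k1; have [bk1 bkE] := beta_step b0 b1 bS k1.
have bk10 : 0 < beta k.+1 by rewrite bS // divr_gt0 // ltr_pwDl // sqrtr_ge0.
have Dy := LS_descent cf gf hpr hc hp (z := y k) lk0 ls.
have Dxs := LS_descent cf gf hpr hc hp (z := xstar) lk0 ls.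
rewrite /= -ye // in Dy Dxs; have hyk1 := hy k.+1 isT.
have uS : u k.+1 = u k - (lambda k * beta k) *: Gmap gradf prox (lambda k) (x k).
  rewrite /u xe // ye //; move: (Gmap _ _ _ _) => G.
  by apply/rowP => i; rewrite !mxE; field; rewrite gt_eqF.
have Sle := xopt (y k); rewrite -(fineK (hy k k1)) -(fineK hxs) -EFinD lee_fin in Sle.
rewrite uS /delta -(fineK hyk1) -(fineK (hy k k1)) -(fineK hxs) -!EFinD lee_fin.
exact: accelerated_step bk1 bkE lk0 lkle Sle (Dy hyk1 (hy k k1)) (Dxs hyk1 hxs).
Qed.
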